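(* For all integers $\alpha\ge2$, $0\le m\le\alpha$ and $n\in\mathbb Z$, $$r_{\alpha-1,n}r_{\alpha-1,n+1}c_{\alpha,m,n}=r_{\alpha,n}r_{\alpha-1,n+1}c_{\alpha-1,m,n}+r_{\alpha-1,n}r_{\alpha,n+1}c_{\alpha-1,m-1,n}+r_{\alpha,n}r_{\alpha,n+1}c_{\alpha-2,m-1,n}.$$
   Context: Let $(r_{1,n})_{n\in\mathbb Z}$ be a sequence of elements of a field $K$. Set $r_{0,n}=1$ and for $\alpha\ge1$, $r_{\alpha,n}=\det_{1\le i,j\le\alpha}(r_{1,n+i+j-1-\alpha})$. For $p\ge0$ define $s_p(j)=j$ if $j\le p$ and $s_p(j)=j+1$ if $j>p$. For $\alpha\ge1$ and $0\le m\le\alpha$ define the ''Wronskian with a defect'' $$c_{\alpha,m,n}=\det_{1\le i,j\le\alpha}\bigl(r_{1,\,n+i+s_{\alpha-m}(j)-\alpha-1}\bigr),$$ set $c_{0,0,n}=1$, and set $c_{\alpha,m,n}=0$ whenever $m<0$ or $m>\alpha$. (Thus $c_{\alpha,0,n}=r_{\alpha,n}$ and $c_{\alpha,\alpha,n}=r_{\alpha,n+1}$.) *)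

From HB Require Import structures.
From mathcomp Require Import all_boot all_order all_algebra.
Set Implicit Arguments. Unset Strict Implicit. Unset Printing Implicit Defensive.
Import Order.TTheory GRing.Theory Num.Theory.
Local Open Scope ring_scope.

Definition rdet (K : fieldType) (r1 : int -> K) (alpha : nat) (n : int) : K :=
  match alpha with
  | 0%N => 1
  | _ => \det (\matrix_(i < alpha, j < alpha)
                 r1 (n + (i.+1)%:Z + (j.+1)%:Z - 1 - alpha%:Z))
  end.

Definition sp (p j : nat) : nat := if (j <= p)%N then j else j.+1.

Definition cdet (K : fieldType) (r1 : int -> K) (alpha : nat) (m : int) (n : int) : K :=
  if (m < 0) || (alpha%:Z < m) then 0
  else match alpha with
  | 0%N => 1
  | _ => \det (\matrix_(i < alpha, j < alpha)
                 r1 (n + (i.+1)%:Z + (sp (alpha - `|m|%N) j.+1)%:Z - alpha%:Z - 1))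
  end.

(* Write N = alpha and, for 0 < m < N, q = N + 1 - m (so 2 <= q <= N).  Consider
   N + 3 column vectors of length N: u = the first unit vector (index 0), the
   Hankel columns h_w with entries r_{1, n + i - N + w} (indices 1 <= w <= N + 1),
   and v = the last unit vector (index N + 2).  Each quantity of the identity is
   the determinant of N of these columns taken in increasing order:
     r_{N,n} = [h_1..h_N],  r_{N,n+1} = [h_2..h_N+1],  c_{N,m,n} = [h_1..h_N+1 \ h_q],
   and, after Laplace expansion along the border columns u and v,
     r_{N-1,n+1} = [u h_2..h_N],       r_{N-1,n} = [h_2..h_N v],
     c_{N-1,m-1,n} = [u h_1..h_N \ h_q],  c_{N-1,m,n} = [h_2..h_N+1 \ h_q, v],
     c_{N-2,m-1,n} = [u h_2..h_N \ h_q, v].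
   With B = h_2..h_N \ h_q, the three-term Pluecker relations for the quadruples
   (u, h_1, h_q, h_N+1) and (u, v, h_q, h_N+1) over B both involve the auxiliary
   minor X = [u B h_N+1]; eliminating X yields the identity.  The boundary cases
   m = 0 and m = N reduce to trivial identities. *)

From HB Require Import structures.
From mathcomp Require Import all_boot all_order all_algebra perm zify ring.
Import Order.TTheory GRing.Theory Num.Theory.
Local Open Scope ring_scope.
Set Implicit Arguments. Unset Strict Implicit. Unset Printing Implicit Defensive.

Section ColumnSelections.
Variable K : fieldType.

Definition seldet N (col : nat -> 'I_N -> K) (f : nat -> nat) : K :=
  \det (\matrix_(i < N, j < N) col (f j) i).

Definition set_col (p x : nat) (f : nat -> nat) (j : nat) : nat :=
  if j == p then x else f j.

Definition move_col (a p : nat) (f : nat -> nat) (j : nat) : nat :=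
  if (j < a)%N then f j else if j == a then f p
  else if (j <= p)%N then f j.-1 else f j.

Lemma seldet_ext N (col : nat -> 'I_N -> K) (f g : nat -> nat) :
  (forall j, (j < N)%N -> f j = g j) -> seldet col f = seldet col g.
Proof.
by move=> fg; congr (\det _); apply/matrixP => i j; rewrite !mxE fg.
Qed.

Lemma seldet_rep N (col : nat -> 'I_N -> K) (f : nat -> nat) (j1 j2 : nat) :
  (j1 < N)%N -> (j2 < N)%N -> j1 != j2 -> f j1 = f j2 -> seldet col f = 0.
Proof.
move=> lt1 lt2 ne12 eq12; rewrite /seldet -det_tr.
apply: (@determinant_alternate _ _ _ (Ordinal lt1) (Ordinal lt2)) => // j.
by rewrite !mxE /= eq12.
Qed.

Lemma seldet_swap N (col : nat -> 'I_N -> K) (f : nat -> nat) (x y : nat) :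
  (x < N)%N -> (y < N)%N -> x != y ->
  seldet col (set_col x (f y) (set_col y (f x) f)) = - seldet col f.
Proof.
move=> ltx lty nexy; rewrite /seldet; pose X := Ordinal ltx; pose Y := Ordinal lty.
have -> : \matrix_(i < N, j < N) col (set_col x (f y) (set_col y (f x) f) j) i
        = xcol X Y (\matrix_(i, j) col (f j) i).
  apply/matrixP => i j; rewrite !mxE /set_col.
  case: tpermP => [-> | -> | /eqP nejx /eqP nejy]; rewrite ?eqxx //.
  - by rewrite ifF //; apply/negbTE; rewrite eq_sym.
  - rewrite -!(inj_eq val_inj) /= in nejx nejy.
    by rewrite (negbTE nejx) (negbTE nejy).
rewrite (@xcolE K N N X Y) det_mulmx det_perm odd_tperm.
by rewrite -(inj_eq val_inj) nexy mulrN1.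
Qed.

(* Moving a column d steps to the left is a product of d transpositions. *)
Lemma seldet_move N (col : nat -> 'I_N -> K) (f : nat -> nat) (a d : nat) :
  (a + d < N)%N -> seldet col (move_col a (a + d) f) = (-1) ^+ d * seldet col f.
Proof.
elim: d f => [|d IHd] f lt_adN.
  rewrite expr0 mul1r; apply: seldet_ext => j _; rewrite /move_col.
  by repeat case: ifP => ?; first [reflexivity | congr (f _); lia].
rewrite exprS mulN1r mulNr -mulrN -(@seldet_swap N col f (a + d) (a + d).+1); try lia.
rewrite -IHd; last lia.
apply: seldet_ext => j _; rewrite /move_col /set_col.
by repeat case: ifP => ?; first [reflexivity | exfalso; lia | congr (f _); lia].
Qed.

(* For N + 1 columns g 0, ..., g N of length N, the vector of signed maximal
   minors is in the kernel: sum_j (-1)^j g_j det(g without g_j) = 0.  This is the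
   Laplace expansion of the (N+1)-square matrix obtained by repeating a row. *)
Lemma seldet_kernel N (col : nat -> 'I_N -> K) (g : nat -> nat) (i : 'I_N) :
  \sum_(j < N.+1) (-1) ^+ j * col (g j) i * seldet col (fun l => g (bump j l)) = 0.
Proof.
pose V := \matrix_(a < N, b < N.+1) col (g b) a.
pose W := \matrix_(a < N.+1, b < N.+1) V (odflt i (unlift 0 a)) b.
have detW : \det W = 0.
  apply: (@determinant_alternate _ _ W 0 (lift 0 i)); first exact: neq_lift.
  by move=> b; rewrite !mxE unlift_none liftK.
rewrite -[RHS]detW (expand_det_row _ 0); apply: eq_bigr => j _.
have minorE : \det (row' 0 (col' j W)) = seldet col (fun l => g (bump j l)).
  by congr (\det _); apply/matrixP => a b; rewrite !mxE liftK.
by rewrite /cofactor minorE !mxE unlift_none add0n mulrCA mulrA.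
Qed.

Lemma seldet_set_col N (col : nat -> 'I_N -> K) (f : nat -> nat) (p : 'I_N) (x : nat) :
  seldet col (set_col p x f) =
  \sum_i cofactor (\matrix_(a < N, b < N) col (f b) a) i p * col x i.
Proof.
rewrite /seldet (expand_det_col _ p); apply: eq_bigr => i _.
rewrite mxE /set_col eqxx mulrC /cofactor; congr (_ * \det _ * _).
apply/matrixP => a b; rewrite !mxE ifF //.
by apply/negbTE; rewrite (inj_eq val_inj) eq_sym neq_lift.
Qed.

Lemma plucker N (col : nat -> 'I_N -> K) (f g : nat -> nat) (p : 'I_N) :
  \sum_(j < N.+1) (-1) ^+ j * seldet col (set_col p (g j) f)
                             * seldet col (fun l => g (bump j l)) = 0.
Proof.
under eq_bigr => j _ do rewrite seldet_set_col mulrAC mulr_sumr.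
rewrite exchange_big big1 // => i _.
set c := cofactor _ i p.
transitivity (c * \sum_(j < N.+1)
                   (-1) ^+ j * col (g j) i * seldet col (fun l => g (bump j l))).
  by rewrite mulr_sumr; apply: eq_bigr => j _; ring.
by rewrite seldet_kernel mulr0.
Qed.

Lemma seldet_first_unit N (col : nat -> 'I_N.+1 -> K) (f : nat -> nat) :
  (forall i : 'I_N.+1, col (f 0%N) i = (i == ord0)%:R) ->
  seldet col f = seldet (fun w (i : 'I_N) => col w (lift ord0 i)) (fun j => f j.+1).
Proof.
move=> unit0; rewrite /seldet (expand_det_col _ ord0) (bigD1 ord0) //=.
rewrite big1 => [|i ne0]; last by rewrite mxE unit0 (negbTE ne0) mul0r.
rewrite addr0 mxE unit0 eqxx mul1r /cofactor /= expr0 mul1r.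
by congr (\det _); apply/matrixP => a b; rewrite !mxE lift0.
Qed.

Lemma seldet_last_unit N (col : nat -> 'I_N.+1 -> K) (f : nat -> nat) :
  (forall i : 'I_N.+1, col (f N) i = (i == ord_max)%:R) ->
  seldet col f = seldet (fun w (i : 'I_N) => col w (widen_ord (leqnSn N) i)) f.
Proof.
move=> unitN; rewrite /seldet (expand_det_col _ ord_max) (bigD1 ord_max) //=.
rewrite big1 => [|i ne]; last by rewrite mxE unitN (negbTE ne) mul0r.
rewrite addr0 mxE unitN eqxx mul1r /cofactor /= -signr_odd oddD addbb expr0 mul1r.
congr (\det _); apply/matrixP => a b; rewrite !mxE lift_max.
by congr (col _ _); apply: val_inj; rewrite /= /bump leqNgt ltn_ord.
Qed.

Lemma sum_three_terms N (F : 'I_N.+1 -> K) (a : 'I_N.+1) : (0 < a < N)%N ->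
  (forall j : 'I_N.+1, j != 0%N :> nat -> j != a :> nat -> j != N :> nat -> F j = 0) ->
  \sum_j F j = F ord0 + F a + F ord_max.
Proof.
move=> /andP[a_gt0 a_ltN] vanish.
rewrite (bigD1 ord0) //= (bigD1 a) /=; last by rewrite -(inj_eq val_inj) /=; lia.
rewrite (bigD1 ord_max) /=; last by rewrite -!(inj_eq val_inj) /=; lia.
rewrite big1 ?addr0 ?addrA // => j; rewrite -!(inj_eq val_inj) /= => nej.
apply: vanish; lia.
Qed.

Lemma plucker_three_terms N (col : nat -> 'I_N -> K) (f g : nat -> nat) (p : 'I_N)
    (a : nat) : (0 < a < N)%N ->
  (forall j, (j < N)%N -> j != 0%N -> j != a -> seldet col (set_col p (g j) f) = 0) ->
  seldet col (set_col p (g 0%N) f) * seldet col (fun l => g l.+1)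
  + (-1) ^+ a * seldet col (set_col p (g a) f) * seldet col (fun l => g (bump a l))
  + (-1) ^+ N * seldet col (set_col p (g N) f) * seldet col g = 0.
Proof.
move=> a_range vanish; have lt_aN : (a < N.+1)%N by lia.
have bump0 : seldet col (fun l => g (bump 0 l)) = seldet col (fun l => g l.+1).
  by apply: seldet_ext => l _; rewrite /bump add1n.
have bumpN : seldet col (fun l => g (bump N l)) = seldet col g.
  by apply: seldet_ext => l lt_lN; rewrite /bump leqNgt lt_lN.
rewrite -[RHS](plucker col f g p) (sum_three_terms (a := Ordinal lt_aN)) //=.
  by rewrite expr0 mul1r bump0 bumpN.
move=> j ne0 nea neN; have lt_jN := ltn_ord j.
by rewrite vanish ?mulr0 ?mul0r //; lia.
Qed.

Lemma sign_succ_mul (m : nat) : (-1) ^+ m.+1 * (-1) ^+ m = - 1 :> K.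
Proof. by rewrite exprS -mulrA -expr2 sqrr_sign mulr1. Qed.

Lemma sign_succ2_mul (m : nat) : (-1) ^+ m.+2 * (-1) ^+ m = 1 :> K.
Proof. by rewrite exprS mulN1r mulNr sign_succ_mul opprK. Qed.

End ColumnSelections.

Lemma eliminate_auxiliary (T : comPzRingType) (r r' R R' c cm cm1 cc X : T) :
  cm1 * R' - r' * c + X * R = 0 -> cc * R' - r * X + cm * r' = 0 ->
  r * r' * c = R * r' * cm + r * R' * cm1 + R * R' * cc.
Proof.
move=> relP relS.
transitivity (R * r' * cm + r * R' * cm1 + R * R' * cc
              - r * (cm1 * R' - r' * c + X * R) - R * (cc * R' - r * X + cm * r')).
  by ring.
by rewrite relP relS !mulr0 !subr0.
Qed.

Section HankelMinors.
Variables (K : fieldType) (r1 : int -> K).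

Lemma rdet_det (a : nat) (t : int) :
  rdet r1 a t = \det (\matrix_(i < a, j < a) r1 (t + i.+1%:Z + j.+1%:Z - 1 - a%:Z)).
Proof. by case: a => [|a] //; rewrite det_mx00. Qed.

Lemma cdet_det (a m : nat) (t : int) : (m <= a)%N ->
  cdet r1 a m%:Z t =
  \det (\matrix_(i < a, j < a) r1 (t + i.+1%:Z + (sp (a - m) j.+1)%:Z - a%:Z - 1)).
Proof.
move=> le_ma; rewrite /cdet ltz_nat ltnNge le_ma /=.
by case: a le_ma => [|a] _ //; rewrite det_mx00.
Qed.

Lemma cdet_negative (a : nat) (t : int) : cdet r1 a (0%N%:Z - 1) t = 0.
Proof. by rewrite /cdet sub0r ltrN10. Qed.

Lemma cdet_too_big (a m : nat) (t : int) : (a < m)%N -> cdet r1 a m%:Z t = 0.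
Proof. by move=> lt_am; rewrite /cdet ltz_nat lt_am orbT. Qed.

Lemma cdet_zero (a : nat) (t : int) : cdet r1 a 0%N%:Z t = rdet r1 a t.
Proof.
rewrite cdet_det // rdet_det; congr (\det _); apply/matrixP => i j; rewrite !mxE.
congr r1; rewrite /sp /=; have := ltn_ord j; case: ifP => ?; lia.
Qed.

Lemma cdet_full (a : nat) (t : int) : cdet r1 a a%:Z t = rdet r1 a (t + 1).
Proof.
rewrite cdet_det // rdet_det; congr (\det _); apply/matrixP => i j; rewrite !mxE.
congr r1; rewrite /sp /=; have := ltn_ord j; case: ifP => ?; lia.
Qed.

End HankelMinors.

(* Identities between index functions are decided by recording the bounds of
   the ordinals in context, splitting on the comparisons they contain (innermost
   first) and concluding by linear arithmetic. *)
Ltac ord_bounds :=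
  repeat match goal with
  | x : 'I_?m |- _ =>
      lazymatch goal with
      | _ : is_true (nat_of_ord x < m)%N |- _ => fail
      | _ => have := ltn_ord x; move=> ?
      end
  end.

Ltac split_innermost_if :=
  match goal with
  | |- context [if ?b then _ else _] =>
      lazymatch b with
      | context [if _ then _ else _] => fail
      | _ => case: (boolP b) => ?
      end
  end.

Ltac index_arith :=
  ord_bounds; rewrite /sp /set_col /move_col /= /bump; repeat split_innermost_if; lia.

(* The interior case alpha = N = k + 2 and m = N + 1 - q with 2 <= q <= N. *)
Section BorderedHankel.
Variables (K : fieldType) (r1 : int -> K) (n : int) (k q : nat).
Hypotheses (q_ge2 : (2 <= q)%N) (q_leN : (q <= k.+2)%N).
Local Notation N := k.+2.

(* The family u = h_0, h_1, ..., h_N+1, v = h_N+2 of the opening comment. *)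
Definition bcol (w : nat) (i : 'I_N) : K :=
  if w == 0%N then (i == 0%N :> nat)%:R
  else if w == N.+2 then (i == N.-1 :> nat)%:R
  else r1 (n + i%:Z + w%:Z - N%:Z).

Local Notation D := (seldet bcol).

Lemma bcol_last (i : 'I_N) : bcol N.+2 i = (i == ord_max)%:R.
Proof. by rewrite /bcol eqxx. Qed.

Lemma hankel_seldet M (row : 'I_M -> 'I_N) (g : nat -> nat) (E : 'I_M -> 'I_M -> int) :
  (forall j, (j < M)%N -> (0 < g j <= N.+1)%N) ->
  (forall i j : 'I_M, n + (row i)%:Z + (g j)%:Z - N%:Z = E i j) ->
  seldet (fun w i => bcol w (row i)) g = \det (\matrix_(i, j) r1 (E i j)).
Proof.
move=> g_range entries; congr (\det _); apply/matrixP => i j; rewrite !mxE -entries.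
have /andP[g_gt0 g_le] := g_range j (ltn_ord j).
by rewrite /bcol !ifF //; apply/negbTE; lia.
Qed.

(* The eight minors of the identity as selections from the family bcol; the
   suffixes r1, c1 and c2 refer to the sizes N - 1, N - 1 and N - 2. *)
Lemma minor_r_n : D succn = rdet r1 N n.
Proof.
by rewrite rdet_det; apply: (hankel_seldet (row := id)) => [j|i j] /=; lia.
Qed.

Lemma minor_r_n1 : D (fun j => j.+2) = rdet r1 N (n + 1).
Proof.
by rewrite rdet_det; apply: (hankel_seldet (row := id)) => [j|i j] /=; lia.
Qed.

Lemma minor_c : D (fun j => bump q j.+1) = cdet r1 N (N.+1 - q)%N%:Z n.
Proof.
rewrite cdet_det; last by lia.
by apply: (hankel_seldet (row := id)) => [j|i j]; index_arith.
Qed.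

Lemma minor_r1_n1 : D (set_col 0 0 succn) = rdet r1 k.+1 (n + 1).
Proof.
rewrite seldet_first_unit // rdet_det.
by apply: (hankel_seldet (row := lift ord0)) => [j|i j]; index_arith.
Qed.

Lemma minor_c1_m1 : D (set_col 0 0 (bump q)) = cdet r1 k.+1 (N - q)%N%:Z n.
Proof.
rewrite seldet_first_unit // cdet_det; last by lia.
by apply: (hankel_seldet (row := lift ord0)) => [j|i j]; index_arith.
Qed.

Lemma minor_r1_n : D (set_col N.-1 N.+2 (fun j => j.+2)) = rdet r1 k.+1 n.
Proof.
rewrite seldet_last_unit => [|i]; last by rewrite /set_col eqxx bcol_last.
rewrite rdet_det.
by apply: (hankel_seldet (row := widen_ord (leqnSn _))) => [j|i j]; index_arith.
Qed.

Lemma minor_c1_m :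
  D (set_col N.-1 N.+2 (fun j => bump q j.+2)) = cdet r1 k.+1 (N.+1 - q)%N%:Z n.
Proof.
rewrite seldet_last_unit => [|i]; last by rewrite /set_col eqxx bcol_last.
rewrite cdet_det; last by lia.
by apply: (hankel_seldet (row := widen_ord (leqnSn _))) => [j|i j]; index_arith.
Qed.

Lemma minor_c2_m1 :
  D (set_col 0 0 (set_col N.-1 N.+2 (fun j => bump q j.+1))) = cdet r1 k (N - q)%N%:Z n.
Proof.
rewrite seldet_first_unit // seldet_last_unit => [|i]; last first.
  by rewrite /set_col eqxx /bcol eqxx lift0 eqSS.
rewrite cdet_det; last by lia.
by apply: (hankel_seldet (row := fun i => lift ord0 (widen_ord (leqnSn _) i)))
  => [j|i j]; index_arith.
Qed.

(* Pluecker relation for (u, h_1, h_q, h_N+1) over B: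
   c_{N-1,m-1} r_{N,n+1} - r_{N-1,n+1} c_{N,m} + X r_{N,n} = 0. *)
Lemma relation_P :
  D (set_col 0 0 (bump q)) * D (fun j => j.+2)
  - D (set_col 0 0 succn) * D (fun j => bump q j.+1)
  + D (set_col 0 0 (fun j => bump q j.+1)) * D succn = 0.
Proof.
have one_lt_N : (1 < N)%N by [].
have range : (0 < q.-2.+1 < N)%N by lia.
have vanish j : (j < N)%N -> j != 0%N -> j != q.-2.+1 ->
    D (set_col 1 j.+1 (set_col 0 0 (bump q))) = 0.
  move=> lt_jN ne0 ne_q; have [lt_jq | ge_jq] := ltnP j.+1 q.
  - by rewrite (@seldet_rep _ _ _ _ 1 j.+1) //; index_arith.
  - by rewrite (@seldet_rep _ _ _ _ 1 j) //; index_arith.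
have := plucker_three_terms (g := succn) (p := Ordinal one_lt_N) range vanish.
have E_cm1 : D (set_col 1 1 (set_col 0 0 (bump q))) = D (set_col 0 0 (bump q)).
  by apply: seldet_ext => j ?; index_arith.
have E_r1 : D (set_col 1 q.-2.+2 (set_col 0 0 (bump q))) =
            (-1) ^+ q.-2 * D (set_col 0 0 succn).
  rewrite -(seldet_move _ _ (a := 1)); last by lia.
  by apply: seldet_ext => j ?; index_arith.
have E_c : D (fun l => (bump q.-2.+1 l).+1) = D (fun j => bump q j.+1).
  by apply: seldet_ext => j ?; index_arith.
have E_X : D (set_col 1 N.+1 (set_col 0 0 (bump q))) =
           (-1) ^+ k * D (set_col 0 0 (fun j => bump q j.+1)).
  rewrite -(seldet_move _ _ (a := 1)); last by lia.
  by apply: seldet_ext => j ?; index_arith.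
rewrite E_cm1 E_r1 E_c E_X !mulrA sign_succ_mul sign_succ2_mul mulN1r mul1r.
by rewrite mulNr.
Qed.

(* Pluecker relation for (u, v, h_q, h_N+1) over B:
   c_{N-2,m-1} r_{N,n+1} - r_{N-1,n} X + c_{N-1,m} r_{N-1,n+1} = 0. *)
Lemma relation_S :
  D (set_col 0 0 (set_col N.-1 N.+2 (fun j => bump q j.+1))) * D (fun j => j.+2)
  - D (set_col N.-1 N.+2 (fun j => j.+2)) * D (set_col 0 0 (fun j => bump q j.+1))
  + D (set_col N.-1 N.+2 (fun j => bump q j.+2)) * D (set_col 0 0 succn) = 0.
Proof.
have range : (0 < q.-2.+1 < N)%N by lia.
have vanish j : (j < N)%N -> j != 0%N -> j != q.-2.+1 ->
    D (set_col 0 (set_col 0 0 succn j) (set_col N.-1 N.+2 (fun j => bump q j.+1))) = 0.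
  move=> lt_jN ne0 ne_q; have [lt_jq | ge_jq] := ltnP j.+1 q.
  - by rewrite (@seldet_rep _ _ _ _ 0 j) //; index_arith.
  - by rewrite (@seldet_rep _ _ _ _ 0 j.-1) //; index_arith.
have := plucker_three_terms (p := ord0) range vanish.
have E_r :
    D (set_col 0 (set_col 0 0 succn q.-2.+1) (set_col N.-1 N.+2 (fun j => bump q j.+1)))
    = (-1) ^+ q.-2 * D (set_col N.-1 N.+2 (fun j => j.+2)).
  rewrite -(seldet_move _ _ (a := 0)); last by lia.
  by apply: seldet_ext => j ?; index_arith.
have E_X : D (fun l => set_col 0 0 succn (bump q.-2.+1 l)) =
           D (set_col 0 0 (fun j => bump q j.+1)).
  by apply: seldet_ext => j ?; index_arith.
have E_cm :
    D (set_col 0 (set_col 0 0 succn N) (set_col N.-1 N.+2 (fun j => bump q j.+1)))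
    = (-1) ^+ k * D (set_col N.-1 N.+2 (fun j => bump q j.+2)).
  rewrite -(seldet_move _ _ (a := 0)); last by lia.
  by apply: seldet_ext => j ?; index_arith.
rewrite E_r E_X E_cm !mulrA sign_succ_mul sign_succ2_mul mulN1r mul1r.
by rewrite mulNr.
Qed.

Lemma identity_interior :
  rdet r1 k.+1 n * rdet r1 k.+1 (n + 1) * cdet r1 N (N.+1 - q)%N%:Z n =
    rdet r1 N n * rdet r1 k.+1 (n + 1) * cdet r1 k.+1 (N.+1 - q)%N%:Z n
  + rdet r1 k.+1 n * rdet r1 N (n + 1) * cdet r1 k.+1 (N - q)%N%:Z n
  + rdet r1 N n * rdet r1 N (n + 1) * cdet r1 k (N - q)%N%:Z n.
Proof.
rewrite -minor_r_n -minor_r_n1 -minor_c -minor_r1_n1 -minor_c1_m1 -minor_r1_n.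
rewrite -minor_c1_m -minor_c2_m1.
exact: eliminate_auxiliary relation_P relation_S.
Qed.

End BorderedHankel.

(* The interior case is identity_interior with q = alpha + 1 - m; for m = 0 and
   m = alpha the defect sits at a border and the identity degenerates. *)
Theorem mainTheorem4 (K : fieldType) (r1 : int -> K) (alpha m : nat) (n : int) :
  (2 <= alpha)%N -> (m <= alpha)%N ->
  rdet r1 alpha.-1 n * rdet r1 alpha.-1 (n + 1) * cdet r1 alpha m%:Z n =
    rdet r1 alpha n * rdet r1 alpha.-1 (n + 1) * cdet r1 alpha.-1 m%:Z n
  + rdet r1 alpha.-1 n * rdet r1 alpha (n + 1) * cdet r1 alpha.-1 (m%:Z - 1) n
  + rdet r1 alpha n * rdet r1 alpha (n + 1) * cdet r1 alpha.-2 (m%:Z - 1) n.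
Proof.
case: alpha => [|[|k]] // _ le_m.
change k.+2.-1 with k.+1; change k.+2.-2 with k.
have [-> | m_gt0] := posnP m.
  by rewrite !cdet_negative !cdet_zero; ring.
have [-> | lt_m] := eqVneq m k.+2.
  have -> : k.+2%:Z - 1 = k.+1%:Z by lia.
  by rewrite !cdet_full !cdet_too_big //; ring.
have -> : m%:Z - 1 = (k.+2 - (k.+3 - m))%N%:Z by lia.
have -> : m%:Z = (k.+3 - (k.+3 - m))%N%:Z by lia.
by apply: identity_interior; lia.
Qed.
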